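(* Let $\theta=\mathrm{cf}(\theta)$, $\kappa$ a cardinal, and $\sigma$ a regular cardinal with $\sigma>\kappa^+$ and $|\alpha|^\kappa<\sigma$ for all $\alpha<\sigma$. Let $D$ be a $\sigma$-complete filter on $\theta$ with $\theta\setminus\alpha\in D$ for all $\alpha<\theta$, and for each $\alpha<\theta$ let $\langle\beta^\alpha_\varepsilon:\varepsilon<\kappa\rangle$ be a sequence of ordinals. Then for every $X\subseteq\theta$ with $X\neq\emptyset$ mod $D$ there are a sequence of ordinals $\langle\beta^*_\varepsilon:\varepsilon<\kappa\rangle$ and $w\subseteq\kappa$ such that: (a) if $\varepsilon\in\kappa\setminus w$ then $\sigma\le\mathrm{cf}(\beta^*_\varepsilon)\le\theta$; (b) the set $B$ of $\alpha\in X$ such that $\beta^\alpha_\varepsilon=\beta^*_\varepsilon$ for all $\varepsilon\in w$, and $\sup\{\beta^*_\zeta:\zeta<\kappa,\beta^*_\zeta<\beta^*_\varepsilon\}<\beta^\alpha_\varepsilon<\beta^*_\varepsilon$ for all $\varepsilon\in\kappa\setminus w$, satisfies $B\neq\emptyset$ mod $D$; (c) if $\beta'_\varepsilon<\beta^*_\varepsilon$ for $\varepsilon\in\kappa\setminus w$, then $\{\alpha\in B:\beta'_\varepsilon<\beta^\alpha_\varepsilon$ for all $\varepsilon\in\kappa\setminus w\}\neq\emptyset$ mod $D$.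
   Context: For $Y\subseteq\theta$, ''$Y\neq\emptyset$ mod $D$'' means $\theta\setminus Y\notin D$. A filter is $\sigma$-complete if it is closed under intersections of fewer than $\sigma$ members. *)

(* Ordinals are modelled as the elements of an arbitrary
   strictly well-ordered type (T, lt); ordinal a is identified with the set
   of its predecessors [seg a]. *)
From Stdlib Require Import Classical.
Set Implicit Arguments.

Section Ord.
Variable T : Type.
Variable lt : T -> T -> Prop.

Definition le (x y : T) : Prop := lt x y \/ x = y.

Definition strict_wellorder : Prop :=
  (forall x, ~ lt x x) /\
  (forall x y z, lt x y -> lt y z -> lt x z) /\
  (forall x y, lt x y \/ x = y \/ lt y x) /\
  well_founded lt.

Definition seg (a : T) : T -> Prop := fun x => lt x a.
Definition segT (a : T) : Type := {x : T | lt x a}.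

Definition card_le (A B : Type) : Prop := exists f : A -> B, forall x y, f x = f y -> x = y.
Definition card_lt (A B : Type) : Prop := ~ card_le B A.

Definition is_cardinal (a : T) : Prop := forall b, lt b a -> card_lt (segT b) (segT a).

Definition cofinal_map (g b : T) (f : segT g -> segT b) : Prop :=
  forall x, lt x b -> exists i, le x (proj1_sig (f i)).

Definition is_cf (b c : T) : Prop :=
  (exists f : segT c -> segT b, cofinal_map f) /\
  (forall g, lt g c -> ~ exists f : segT g -> segT b, cofinal_map f).

Definition is_sup (S : T -> Prop) (s : T) : Prop :=
  (forall x, S x -> le x s) /\ (forall u, (forall x, S x -> le x u) -> le s u).

Definition complete_filter (theta sigma : T) (D : (T -> Prop) -> Prop) : Prop :=
  (forall A, D A -> forall x, A x -> lt x theta) /\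
  D (seg theta) /\
  ~ D (fun _ => False) /\
  (forall A B, D A -> (forall x, A x -> B x) -> (forall x, B x -> lt x theta) -> D B) /\
  (forall g, lt g sigma -> forall F : segT g -> T -> Prop, (forall i, D (F i)) ->
       D (fun x => lt x theta /\ forall i, F i x)).

(* Y <> emptyset mod D, i.e. theta \ Y notin D *)
Definition pos_mod (theta : T) (D : (T -> Prop) -> Prop) (Y : T -> Prop) : Prop :=
  ~ D (fun x => lt x theta /\ ~ Y x).

End Ord.

From Stdlib Require Import Classical ClassicalEpsilon FunctionalExtensionality ProofIrrelevance.
From Stdlib Require Import List Lia.
Set Implicit Arguments.

(* Call [(Y, c, w)] good for a set [P] of coordinates if positively many [a] in [Y] satisfy
   [beta a e = c e] on [P /\ w] and [beta a e < c e] on [P \ w], still positively many when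
   moreover [beta a] must exceed an arbitrary vector below [c] on [P \ w], and [c e] has
   cofinality [>= sigma] on [P \ w].  Goodness for [P = kappa] is the theorem: the [beta a e]
   are cofinal in [c e], so [cf (c e) <= theta], and since [cf (c e) > kappa] the supremum of
   the values [c z < c e] stays below [c e].

   For finite [kappa], coordinates are added one at a time.  The new bound is the least [u]
   that jointly bounds the new coordinate on some good subset: either [u] itself is hit
   jointly positively often, or [cf u >= sigma], since a shorter cofinal sequence would give,
   by completeness of the filter, a smaller such bound.

   For infinite [kappa], [|alpha|^kappa < sigma] and König's inequality give [d < sigma] of
   cofinality [> kappa], and in [d] stages one builds a set [C] of size [< sigma] containing
   the witnesses of joint nullity of its [kappa]-sequences and short cofinal sequences of its
   elements.  Label each [a] by the least points of [C] above the [beta a e]: by completeness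
   some label class is positive, and the closure properties of [C] make that label good. *)

Lemma sig_eq {A : Type} {P : A -> Prop} {u v : {a | P a}} :
  proj1_sig u = proj1_sig v -> u = v.
Proof. apply eq_sig_hprop. intros; apply proof_irrelevance. Qed.

Lemma dependent_choice {A : Type} {B : A -> Type} {R : forall a, B a -> Prop} :
  (forall a, exists b, R a b) -> exists f : forall a, B a, forall a, R a (f a).
Proof.
  intros H. exists (fun a => proj1_sig (constructive_indefinite_description _ (H a))).
  intros a. exact (proj2_sig (constructive_indefinite_description _ (H a))).
Qed.

Lemma card_le_trans (A B C : Type) : card_le A B -> card_le B C -> card_le A C.
Proof.
  intros [f Hf] [g Hg]. exists (fun x => g (f x)). intros x y E. exact (Hf _ _ (Hg _ _ E)).
Qed.

(** * Well-orders, cofinality and cardinality *)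

Section Ordinals.
Variable T : Type.
Variable lt : T -> T -> Prop.
Hypothesis Hwo : strict_wellorder lt.
Local Notation sg := (segT lt).

Lemma lt_irrefl {x} : ~ lt x x. Proof. apply Hwo. Qed.
Lemma lt_trans {x y z} : lt x y -> lt y z -> lt x z. Proof. apply Hwo. Qed.
Lemma lt_trichotomy x y : lt x y \/ x = y \/ lt y x. Proof. apply Hwo. Qed.
Lemma lt_wf : well_founded lt. Proof. apply Hwo. Qed.

Lemma lt_asym {x y} : lt x y -> ~ lt y x.
Proof. intros H1 H2. exact (lt_irrefl (lt_trans H1 H2)). Qed.
Lemma le_refl x : le lt x x. Proof. now right. Qed.
Lemma lt_le_trans {x y z} : lt x y -> le lt y z -> lt x z.
Proof. intros H [H'| <-]; [exact (lt_trans H H') | exact H]. Qed.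
Lemma le_lt_trans {x y z} : le lt x y -> lt y z -> lt x z.
Proof. intros [H| ->] H'; [exact (lt_trans H H') | exact H']. Qed.
Lemma le_not_lt {x y} : le lt x y -> ~ lt y x.
Proof. intros H H'. exact (lt_irrefl (le_lt_trans H H')). Qed.
Lemma not_lt_le {x y} : ~ lt x y -> le lt y x.
Proof.
  intros H. destruct (lt_trichotomy x y) as [h|[-> |h]];
    [contradiction | apply le_refl | now left].
Qed.
Lemma not_le_lt {x y} : ~ le lt x y -> lt y x.
Proof.
  intros H. destruct (lt_trichotomy x y) as [h|[-> |h]];
    [destruct H; now left | destruct H; apply le_refl | exact h].
Qed.
Lemma le_neq_lt {x y} : le lt x y -> x <> y -> lt x y.
Proof. intros [h|h] hn; [exact h | contradiction]. Qed.

Lemma exists_least (P : T -> Prop) :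
  (exists x, P x) -> exists x, P x /\ forall y, P y -> le lt x y.
Proof.
  intros [x Hx]. revert Hx. induction x as [x IH] using (well_founded_ind lt_wf). intros Hx.
  destruct (classic (exists y, P y /\ lt y x)) as [[y [Py Hy]]|Hn].
  - exact (IH y Hy Py).
  - exists x. split; [exact Hx|]. intros y Py. apply not_lt_le. intros Hy. apply Hn. eauto.
Qed.

Definition least (P : T -> Prop) (H : exists x, P x) : T :=
  proj1_sig (constructive_indefinite_description _ (exists_least P H)).

Lemma least_spec P H : P (least P H) /\ forall y, P y -> le lt (least P H) y.
Proof. unfold least. destruct (constructive_indefinite_description _ _) as [x Hx]. exact Hx. Qed.

Lemma exists_sup (S : T -> Prop) u :
  (forall x, S x -> le lt x u) -> exists s, is_sup lt S s /\ le lt s u.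
Proof.
  intros Hu.
  destruct (exists_least (fun s => forall x, S x -> le lt x s) (ex_intro _ u Hu)) as [s [Hs Hmin]].
  exists s. split; [split; assumption | exact (Hmin u Hu)].
Qed.

Definition succ (x : T) : T :=
  match excluded_middle_informative (exists y, lt x y) with
  | left H => least (lt x) H
  | right _ => x
  end.

Lemma succ_spec x y : lt x y -> lt x (succ x) /\ forall z, lt x z -> le lt (succ x) z.
Proof.
  intros Hy. unfold succ. destruct (excluded_middle_informative _) as [H|H].
  - apply least_spec.
  - destruct H. eauto.
Qed.

Lemma not_cofinal_bounded g b (f : sg g -> sg b) :
  ~ cofinal_map f -> exists x, lt x b /\ forall i, lt (proj1_sig (f i)) x.
Proof.
  intros H. apply not_all_ex_not in H. destruct H as [x Hx].
  apply imply_to_and in Hx. destruct Hx as [Hxb Hx]. exists x. split; [exact Hxb|].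
  intros i. apply not_le_lt. intros Hle. apply Hx. eauto.
Qed.

Lemma bounded_below_of_not_cofinal k b (F : T -> T) :
  (exists x, lt x b) -> (forall f : sg k -> sg b, ~ cofinal_map f) ->
  exists y, lt y b /\ forall z, lt z k -> lt (F z) b -> lt (F z) y.
Proof.
  intros [x0 Hx0] Hnc.
  pose (f := fun z : sg k =>
    match excluded_middle_informative (lt (F (proj1_sig z)) b) with
    | left H => exist _ (F (proj1_sig z)) H
    | right _ => exist _ x0 Hx0
    end : sg b).
  destruct (not_cofinal_bounded (Hnc f)) as [y [Hy Hfy]]. exists y. split; [exact Hy|].
  intros z Hz HFz. specialize (Hfy (exist _ z Hz)). unfold f in Hfy.
  destruct (excluded_middle_informative _); [exact Hfy | contradiction].
Qed.

Definition has_cofinal_map (b g : T) : Prop := exists f : sg g -> sg b, cofinal_map f.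

Lemma has_cofinal_map_self b : has_cofinal_map b b.
Proof. exists (fun x => x). intros x Hx. exists (exist _ x Hx). apply le_refl. Qed.

Definition cf (b : T) : T := least (has_cofinal_map b) (ex_intro _ b (has_cofinal_map_self b)).

Lemma cf_le b g (f : sg g -> sg b) : cofinal_map f -> le lt (cf b) g.
Proof. intros Hf. apply least_spec. now exists f. Qed.

Lemma is_cf_cf b : is_cf lt b (cf b).
Proof.
  split; [apply (least_spec (has_cofinal_map b))|].
  intros g Hg [f Hf]. exact (le_not_lt (cf_le Hf) Hg).
Qed.

Definition cf_map (b : T) : sg (cf b) -> sg b :=
  proj1_sig (constructive_indefinite_description _ (proj1 (is_cf_cf b))).

Lemma cf_map_cofinal b : cofinal_map (cf_map b).
Proof. unfold cf_map. destruct (constructive_indefinite_description _ _) as [f Hf]. exact Hf. Qed.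

Lemma card_le_seg x y : le lt x y -> card_le (sg x) (sg y).
Proof.
  intros H. exists (fun z => exist _ (proj1_sig z) (lt_le_trans (proj2_sig z) H) : sg y).
  intros z z' E. apply sig_eq. exact (f_equal (@proj1_sig _ _) E).
Qed.

Lemma card_lt_seg_lt x y : card_lt (sg x) (sg y) -> lt x y.
Proof. intros H. apply not_le_lt. intros Hle. exact (H (card_le_seg Hle)). Qed.

Lemma card_le_closed_seg (A : Type) x :
  card_le (A * bool) {y | le lt y x} -> card_le A (sg x).
Proof.
  intros [K HK].
  assert (Hb : exists b, forall a, proj1_sig (K (a, b)) <> x).
  { destruct (classic (exists a, proj1_sig (K (a, true)) = x)) as [[a Ha]|Hn].
    - exists false. intros a' E.
      assert (Hab : (a', false) = (a, true)) by (apply HK, sig_eq; congruence).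
      discriminate Hab.
    - exists true. intros a Ha. apply Hn. eauto. }
  destruct Hb as [b Hb].
  exists (fun a => exist _ (proj1_sig (K (a, b))) (le_neq_lt (proj2_sig (K (a, b))) (Hb a)) : sg x).
  intros a a' E. apply (f_equal (@proj1_sig _ _)) in E. simpl in E.
  assert (Hab : (a, b) = (a', b)) by (apply HK, sig_eq; exact E).
  congruence.
Qed.

(* Transfinite enumeration of [A] by fresh elements: it either runs through all of [s],
   giving [sg s -> A] injective, or exhausts [A] at some stage [g < s]. *)
Lemma card_lt_seg_inj_inhabited (A : Type) (a0 : A) s :
  card_lt A (sg s) -> exists g, lt g s /\ card_le A (sg g).
Proof.
  intros Hlt.
  pose (F := fun (x : T) (rec : forall y, lt y x -> A) =>
    match excluded_middle_informative (exists a, forall y (H : lt y x), rec y H <> a) with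
    | left H => proj1_sig (constructive_indefinite_description _ H)
    | right _ => a0
    end).
  pose (en := Fix lt_wf (fun _ => A) F).
  assert (Hen : forall x, en x = F x (fun y _ => en y)).
  { intros x. apply (Fix_eq lt_wf (fun _ => A) F). intros x0 f g Hfg.
    replace g with f; [reflexivity|].
    apply functional_extensionality_dep; intros y. apply functional_extensionality_dep; intros p.
    apply Hfg. }
  assert (Hfresh : forall x, (exists a, forall y, lt y x -> en y <> a) ->
                   forall y, lt y x -> en y <> en x).
  { intros x [a Ha] y Hy. rewrite (Hen x). unfold F.
    destruct (excluded_middle_informative _) as [H|H].
    - destruct (constructive_indefinite_description _ H) as [b Hb]. exact (Hb y Hy).
    - destruct H. exists a. intros y0 H0. apply Ha, H0. }
  destruct (classic (forall x, lt x s -> exists a, forall y, lt y x -> en y <> a)) as [Hall|Hn].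
  - destruct Hlt. exists (fun x : sg s => en (proj1_sig x)).
    intros [x hx] [y hy] E. apply sig_eq. simpl in *.
    destruct (lt_trichotomy x y) as [h|[h|h]]; [|exact h|].
    + destruct (Hfresh y (Hall y hy) x h E).
    + destruct (Hfresh x (Hall x hx) y h (eq_sym E)).
  - apply not_all_ex_not in Hn. destruct Hn as [x Hx]. apply imply_to_and in Hx.
    destruct Hx as [Hx Hnf].
    assert (Hpre : forall a, exists y, lt y x /\ en y = a).
    { intros a. apply NNPP. intros Hn. apply Hnf. exists a. intros y Hy E. apply Hn. eauto. }
    destruct (choice _ Hpre) as [pre Hpre'].
    exists x. split; [exact Hx|].
    exists (fun a => exist _ (pre a) (proj1 (Hpre' a)) : sg x).
    intros a b E. apply (f_equal (@proj1_sig _ _)) in E. simpl in E.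
    rewrite <- (proj2 (Hpre' a)), <- (proj2 (Hpre' b)), E. reflexivity.
Qed.

Lemma card_lt_seg_inj (A : Type) s :
  card_lt A (sg s) -> exists g, lt g s /\ card_le A (sg g).
Proof.
  intros Hlt. destruct (classic (inhabited A)) as [[a0]|Hne].
  - exact (card_lt_seg_inj_inhabited a0 Hlt).
  - destruct (classic (exists g, lt g s)) as [[g Hg]|Hs].
    + exists g. split; [exact Hg|]. exists (fun a => False_rect _ (Hne (inhabits a))).
      intros a. destruct (Hne (inhabits a)).
    + destruct Hlt. exists (fun x : sg s => False_rect A (Hs (ex_intro _ _ (proj2_sig x)))).
      intros x. destruct (Hs (ex_intro _ _ (proj2_sig x))).
Qed.

Lemma finite_or_omega k :
  (exists K, forall x, In x K <-> lt x k) \/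
  (exists f : nat -> T, (forall n, lt (f n) k) /\ forall n m, (n < m)%nat -> lt (f n) (f m)).
Proof.
  destruct (classic (exists x, lt x k)) as [[x0 Hx0]|Hempty].
  2:{ left. exists nil. simpl. split; [tauto|]. intros Hx. eauto. }
  destruct (exists_least (fun _ => True) (ex_intro _ x0 I)) as [b [_ Hb]].
  pose (fin := fun n => Nat.iter n succ b).
  assert (Hcover : forall n x, lt x (fin n) -> exists j, (j < n)%nat /\ x = fin j).
  { induction n as [|n IH]; intros x Hx.
    - destruct (le_not_lt (Hb x I) Hx).
    - destruct (lt_trichotomy x (fin n)) as [h|[-> |h]].
      + destruct (IH x h) as [j [hj ->]]. exists j. split; [lia | reflexivity].
      + exists n. split; [lia | reflexivity].
      + destruct (le_not_lt (proj2 (succ_spec h) x h) Hx). }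
  destruct (classic (forall n, lt (fin n) k)) as [Hall|Hn]; [right|left].
  - exists fin. split; [exact Hall|]. intros n m Hnm. induction Hnm as [|m Hnm IH].
    + exact (proj1 (succ_spec (Hall n))).
    + exact (lt_trans IH (proj1 (succ_spec (Hall m)))).
  - apply not_all_ex_not in Hn. destruct Hn as [n0 Hn0].
    assert (Hmin : exists n, ~ lt (fin n) k /\ forall j, (j < n)%nat -> lt (fin j) k).
    { revert Hn0. induction n0 as [n0 IH] using (well_founded_ind Wf_nat.lt_wf). intros Hn0.
      destruct (classic (exists j, (j < n0)%nat /\ ~ lt (fin j) k)) as [[j [hj1 hj2]]|Hno].
      - exact (IH j hj1 hj2).
      - exists n0. split; [exact Hn0|]. intros j hj. apply NNPP. intros h. apply Hno. eauto. }
    destruct Hmin as [n [Hn Hlt]].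
    exists (map fin (seq 0 n)). intros x. rewrite in_map_iff. split.
    + intros [j [<- Hj]]. apply in_seq in Hj. apply Hlt. lia.
    + intros Hx. destruct (Hcover n x (lt_le_trans Hx (not_lt_le Hn))) as [j [hj ->]].
      exists j. split; [reflexivity|]. apply in_seq. lia.
Qed.

(* Codes [a < y] by [i :: code of a below f i] for a cofinal [f], the list [i :: nil]
   being reserved for [a = f i]. *)
Lemma seg_inj_list k s :
  (forall y, lt y s -> (exists x, lt x y) -> exists f : sg k -> sg y, cofinal_map f) ->
  forall y, lt y s -> exists phi : sg y -> list (sg k),
    (forall a b, phi a = phi b -> a = b) /\ forall a, phi a <> nil.
Proof.
  intros H y. induction y as [y IH] using (well_founded_ind lt_wf). intros Hy.
  destruct (classic (exists x, lt x y)) as [Hne|Hemp].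
  2:{ exists (fun _ => nil).
      split; intros a; destruct Hemp; exists (proj1_sig a); exact (proj2_sig a). }
  destruct (H y Hy Hne) as [f Hf].
  assert (Hsub : forall i, exists phi : sg (proj1_sig (f i)) -> list (sg k),
                   (forall a b, phi a = phi b -> a = b) /\ forall a, phi a <> nil).
  { intros i. apply IH; [exact (proj2_sig (f i)) | exact (lt_trans (proj2_sig (f i)) Hy)]. }
  destruct (dependent_choice Hsub) as [phi Hphi].
  destruct (choice _ (fun a : sg y => Hf _ (proj2_sig a))) as [ch Hch].
  exists (fun a => match excluded_middle_informative (proj1_sig a = proj1_sig (f (ch a))) with
           | left _ => ch a :: nil
           | right Hn => ch a :: phi (ch a) (exist _ (proj1_sig a) (le_neq_lt (Hch a) Hn))
           end).
  split.
  - intros a b.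
    destruct (excluded_middle_informative (proj1_sig a = proj1_sig (f (ch a)))) as [Ea|Na];
    destruct (excluded_middle_informative (proj1_sig b = proj1_sig (f (ch b)))) as [Eb|Nb];
    intros E; injection E.
    + intros E1. apply sig_eq. rewrite Ea, Eb, E1. reflexivity.
    + intros E1 _. destruct (proj2 (Hphi (ch b)) _ (eq_sym E1)).
    + intros E1 _. destruct (proj2 (Hphi (ch a)) _ E1).
    + intros E2 E1. revert E2. generalize (le_neq_lt (Hch a) Na) (le_neq_lt (Hch b) Nb).
      rewrite E1. intros p q E2. apply (proj1 (Hphi (ch b))) in E2.
      apply sig_eq. exact (f_equal (@proj1_sig _ _) E2).
  - intros a. destruct (excluded_middle_informative _); discriminate.
Qed.

(* König's inequality: [g^k <= g] forbids [cf g <= k] as soon as [g] does not inject into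
   any proper closed initial segment.  Diagonalise against the images of [f i]. *)
Lemma no_cofinal_map_of_power k g :
  card_le (sg k -> sg g) (sg g) ->
  (forall x, lt x g -> ~ card_le (sg g) {y | le lt y x}) ->
  forall f : sg k -> sg g, ~ cofinal_map f.
Proof.
  intros [J HJ] Hlarge f Hf.
  pose (Jinv := fun x : sg g =>
    match excluded_middle_informative (exists h, J h = x) with
    | left Hx => proj1_sig (constructive_indefinite_description _ Hx)
    | right _ => fun _ => x
    end).
  assert (HJinv : forall h, Jinv (J h) = h).
  { intros h. unfold Jinv. destruct (excluded_middle_informative _) as [Hx|Hx].
    - destruct (constructive_indefinite_description _ Hx) as [h' Hh']. exact (HJ _ _ Hh').
    - destruct Hx. eauto. }
  assert (Hdiag : forall i, exists y : sg g,
            forall x : sg g, le lt (proj1_sig x) (proj1_sig (f i)) -> Jinv x i <> y).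
  { intros i. apply NNPP. intros Hn.
    assert (Hs : forall y, exists x : {x : sg g | le lt (proj1_sig x) (proj1_sig (f i))},
                   Jinv (proj1_sig x) i = y).
    { intros y. apply NNPP. intros Hn'. apply Hn. exists y. intros x Hx E.
      apply Hn'. exists (exist _ x Hx). exact E. }
    destruct (choice _ Hs) as [psi Hpsi].
    apply (Hlarge _ (proj2_sig (f i))).
    exists (fun y => exist _ (proj1_sig (proj1_sig (psi y))) (proj2_sig (psi y))
                     : {z | le lt z (proj1_sig (f i))}).
    intros y y' E. apply (f_equal (@proj1_sig _ _)) in E. simpl in E.
    rewrite <- (Hpsi y), <- (Hpsi y'). do 2 f_equal. apply sig_eq, sig_eq, E. }
  destruct (choice _ Hdiag) as [h Hh].
  destruct (Hf _ (proj2_sig (J h))) as [i Hi].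
  apply (Hh i (J h) Hi). rewrite HJinv. reflexivity.
Qed.

(** * Positive sets modulo a complete filter *)

Section Filter.
Variables theta sigma : T.
Variable D : (T -> Prop) -> Prop.
Hypothesis HD : complete_filter lt theta sigma D.

Definition small_type (A : Type) : Prop := exists g, lt g sigma /\ card_le A (sg g).
Definition null (Y : T -> Prop) : Prop := D (fun x => lt x theta /\ ~ Y x).
Local Notation pos := (pos_mod lt theta D).

Lemma null_mono {Y Y' : T -> Prop} :
  null Y -> (forall a, lt a theta -> Y' a -> Y a) -> null Y'.
Proof.
  intros H Hsub. destruct HD as [_ [_ [_ [Hup _]]]]. apply (Hup _ _ H).
  - intros x [Hx Hn]. split; [exact Hx|]. intros HY. exact (Hn (Hsub x Hx HY)).
  - intros x [Hx _]. exact Hx.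
Qed.

Lemma pos_mono {Y Y' : T -> Prop} :
  pos Y' -> (forall a, lt a theta -> Y' a -> Y a) -> pos Y.
Proof. intros H Hsub Hn. apply H. exact (null_mono Hn Hsub). Qed.

Lemma null_of_empty (Y : T -> Prop) : (forall a, lt a theta -> ~ Y a) -> null Y.
Proof.
  intros H. destruct HD as [_ [Htheta [_ [Hup _]]]]. apply (Hup _ _ Htheta).
  - intros x Hx. split; [exact Hx | exact (H x Hx)].
  - intros x [Hx _]. exact Hx.
Qed.

Lemma pos_inhabited (Y : T -> Prop) : pos Y -> exists a, lt a theta /\ Y a.
Proof.
  intros H. apply NNPP. intros Hn. apply H. apply null_of_empty.
  intros a Ha HY. apply Hn. eauto.
Qed.

Lemma small_type_inj (A B : Type) : card_le A B -> small_type B -> small_type A.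
Proof. intros H [g [Hg H']]. exists g. split; [exact Hg | exact (card_le_trans H H')]. Qed.

Lemma small_type_seg g : lt g sigma -> small_type (sg g).
Proof. intros H. exists g. split; [exact H|]. exists (fun x => x). auto. Qed.

Lemma small_type_bool {x y : T} : is_cf lt sigma sigma -> lt x sigma -> lt y x -> small_type bool.
Proof.
  intros [_ Hreg] Hx Hy.
  assert (Hg : exists g, lt x g /\ lt g sigma).
  { apply NNPP. intros Hn. apply (Hreg x Hx).
    exists (fun _ => exist _ x Hx). intros z Hz. exists (exist _ y Hy). simpl.
    apply not_lt_le. intros Hxz. apply Hn. eauto. }
  destruct Hg as [g [Hxg Hg]]. exists g. split; [exact Hg|].
  exists (fun b : bool => if b then exist _ x Hxg else exist _ y (lt_trans Hy Hxg) : sg g).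
  intros [|] [|] E; try reflexivity; apply (f_equal (@proj1_sig _ _)) in E; simpl in E;
    rewrite E in Hy; destruct (lt_irrefl Hy).
Qed.

Lemma null_bigunion (I : Type) (F : I -> T -> Prop) :
  small_type I -> (forall i, null (F i)) -> null (fun a => exists i, F i a).
Proof.
  intros [g [Hg [J HJ]]] HF. destruct HD as [_ [_ [_ [Hup Hcomplete]]]].
  pose (G := fun (j : sg g) x =>
    lt x theta /\ forall i, J i = j -> ~ F i x).
  assert (HG : forall j, D (G j)).
  { intros j. destruct (classic (exists i, J i = j)) as [[i <-]|Hj].
    - apply (Hup _ _ (HF i)).
      + intros x [Hx Hn]. split; [exact Hx|]. intros i' E. rewrite (HJ _ _ E). exact Hn.
      + intros x [Hx _]. exact Hx.
    - destruct HD as [_ [Htheta _]]. apply (Hup _ _ Htheta).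
      + intros x Hx. split; [exact Hx|]. intros i E. destruct Hj. eauto.
      + intros x [Hx _]. exact Hx. }
  apply (Hup _ _ (Hcomplete g Hg G HG)).
  - intros x [Hx Hall]. split; [exact Hx|]. intros [i Hi]. exact (proj2 (Hall (J i)) i eq_refl Hi).
  - intros x [Hx _]. exact Hx.
Qed.

Lemma null_union (Y1 Y2 : T -> Prop) :
  small_type bool -> null Y1 -> null Y2 -> null (fun a => Y1 a \/ Y2 a).
Proof.
  intros Hbool H1 H2.
  apply (@null_mono (fun a => exists b : bool, (if b then Y1 else Y2) a)).
  - apply null_bigunion; [exact Hbool|]. intros [|]; assumption.
  - intros a _ [h|h]; [exists true | exists false]; exact h.
Qed.

(** * Good approximations *)

Section Goodness.
Variable beta : T -> T -> T.
Implicit Types (P w Y Z : T -> Prop) (c v : T -> T).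

Definition fits P c w (a : T) : Prop :=
  (forall e, P e -> w e -> beta a e = c e) /\ (forall e, P e -> ~ w e -> lt (beta a e) (c e)).

Definition under P c w v : Prop :=
  forall e, P e -> ~ w e -> lt (v e) (c e).

Definition exceeds P w v (a : T) : Prop :=
  forall e, P e -> ~ w e -> lt (v e) (beta a e).

Definition jointly_pos P c w Y : Prop :=
  forall v, under P c w v -> pos (fun a => Y a /\ fits P c w a /\ exceeds P w v a).

Definition jointly_null P c w Y : Prop :=
  exists v, under P c w v /\ null (fun a => Y a /\ fits P c w a /\ exceeds P w v a).

Definition cf_large P c w : Prop :=
  forall e, P e -> ~ w e -> forall g, lt g sigma -> forall f : sg g -> sg (c e), ~ cofinal_map f.

Definition good P Y c w : Prop :=
  pos (fun a => Y a /\ fits P c w a) /\ jointly_pos P c w Y /\ cf_large P c w.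

Definition vmax (v1 v2 : T -> T) : T -> T :=
  fun e => if excluded_middle_informative (lt (v1 e) (v2 e)) then v2 e else v1 e.

Lemma vmax_l v1 v2 e : le lt (v1 e) (vmax v1 v2 e).
Proof. unfold vmax. destruct (excluded_middle_informative _); [now left | apply le_refl]. Qed.

Lemma vmax_r v1 v2 e : le lt (v2 e) (vmax v1 v2 e).
Proof.
  unfold vmax. destruct (excluded_middle_informative _); [apply le_refl | now apply not_lt_le].
Qed.

Lemma under_vmax P c w v1 v2 : under P c w v1 -> under P c w v2 -> under P c w (vmax v1 v2).
Proof. intros H1 H2 e He Hw. unfold vmax. destruct (excluded_middle_informative _); auto. Qed.

Lemma under_beta P c w a : fits P c w a -> under P c w (beta a).
Proof. intros [_ H] e He Hw. exact (H e He Hw). Qed.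

Lemma exceeds_mono P w v v' a :
  (forall e, P e -> ~ w e -> le lt (v e) (v' e)) -> exceeds P w v' a -> exceeds P w v a.
Proof. intros Hle H e He Hw. exact (le_lt_trans (Hle e He Hw) (H e He Hw)). Qed.

Lemma jointly_pos_iff P c w Y : jointly_pos P c w Y <-> ~ jointly_null P c w Y.
Proof.
  split.
  - intros H [v [Hv Hn]]. exact (H v Hv Hn).
  - intros H v Hv Hn. apply H. now exists v.
Qed.

Lemma jointly_null_mono {P c w} {Y Y' : T -> Prop} :
  (forall a, Y' a -> Y a) -> jointly_null P c w Y -> jointly_null P c w Y'.
Proof.
  intros Hsub [v [Hv Hn]]. exists v. split; [exact Hv|].
  apply (null_mono Hn). intros a _ [HY HR]. exact (conj (Hsub a HY) HR).
Qed.

Lemma jointly_null_union P c w (Y1 Y2 : T -> Prop) : small_type bool ->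
  jointly_null P c w Y1 -> jointly_null P c w Y2 -> jointly_null P c w (fun a => Y1 a \/ Y2 a).
Proof.
  intros Hbool [v1 [Hv1 N1]] [v2 [Hv2 N2]].
  exists (vmax v1 v2). split; [exact (under_vmax Hv1 Hv2)|].
  apply (null_mono (null_union Hbool N1 N2)). intros a _ [[H|H] [Hf Hx]]; [left|right];
    (split; [exact H | split; [exact Hf|]]); eapply exceeds_mono; eauto;
    intros; [apply vmax_l | apply vmax_r].
Qed.

Lemma under_bounded_family P c w g (v : sg g -> T -> T) :
  cf_large P c w -> lt g sigma -> (forall i, under P c w (v i)) ->
  exists v', under P c w v' /\ forall i e, P e -> ~ w e -> lt (v i e) (v' e).
Proof.
  intros Hlarge Hg Hv.
  assert (Hbound : forall e, exists y, P e -> ~ w e -> lt y (c e) /\ forall i, lt (v i e) y).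
  { intros e. destruct (classic (P e /\ ~ w e)) as [[He Hw]|Hn]; [|exists e; tauto].
    destruct (not_cofinal_bounded (Hlarge e He Hw g Hg
                (fun i => exist _ (v i e) (Hv i e He Hw)))) as [y Hy].
    exists y. intros _ _. exact Hy. }
  destruct (choice _ Hbound) as [v' Hv']. exists v'. split.
  - intros e He Hw. exact (proj1 (Hv' e He Hw)).
  - intros i e He Hw. exact (proj2 (Hv' e He Hw) i).
Qed.

Lemma jointly_null_bigunion P c w g (F : sg g -> T -> Prop) :
  cf_large P c w -> lt g sigma -> (forall i, jointly_null P c w (F i)) ->
  jointly_null P c w (fun a => exists i, F i a).
Proof.
  intros Hlarge Hg HF. destruct (choice _ HF) as [v Hv].
  destruct (under_bounded_family v Hlarge Hg (fun i => proj1 (Hv i))) as [v' [Hv' Hdom]].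
  exists v'. split; [exact Hv'|].
  apply (@null_mono (fun a => exists i, F i a /\ fits P c w a /\ exceeds P w (v i) a)).
  - apply null_bigunion; [exact (small_type_seg Hg) | intros i; exact (proj2 (Hv i))].
  - intros a _ [[i Hi] [Hf Hx]]. exists i. split; [exact Hi|]. split; [exact Hf|].
    apply (@exceeds_mono _ _ _ v'); [|exact Hx]. intros e He Hw. left. exact (Hdom i e He Hw).
Qed.

Lemma jointly_pos_diff {P c w} {Y N Z : T -> Prop} : small_type bool ->
  jointly_pos P c w Y -> jointly_null P c w N -> (forall a, Y a -> Z a \/ N a) ->
  jointly_pos P c w Z.
Proof.
  intros Hbool HY HN Hsub. apply jointly_pos_iff. intros HZ.
  apply (proj1 (jointly_pos_iff P c w Y) HY).
  exact (jointly_null_mono Hsub (jointly_null_union Hbool HZ HN)).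
Qed.

Lemma jointly_null_of_empty P c w Z :
  (exists a, fits P c w a) -> (forall a, lt a theta -> ~ Z a) -> jointly_null P c w Z.
Proof.
  intros [a0 Ha0] HZ. exists (beta a0). split; [exact (under_beta Ha0)|].
  apply null_of_empty. intros a Ha [H _]. exact (HZ a Ha H).
Qed.

Lemma jointly_pos_cofinal_piece P c w Y (h : T -> T) u g (f : sg g -> sg u) :
  cf_large P c w -> lt g sigma -> cofinal_map f ->
  jointly_pos P c w (fun a => Y a /\ lt (h a) u) ->
  exists i, jointly_pos P c w (fun a => Y a /\ le lt (h a) (proj1_sig (f i))).
Proof.
  intros Hlarge Hg Hf HY. apply NNPP. intros Hn.
  assert (Hnull : forall i, jointly_null P c w (fun a => Y a /\ le lt (h a) (proj1_sig (f i)))).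
  { intros i. apply NNPP. intros Hi. apply Hn. exists i. now apply jointly_pos_iff. }
  apply (proj1 (jointly_pos_iff _ _ _ _) HY).
  apply (jointly_null_mono (Y := fun a => exists i, Y a /\ le lt (h a) (proj1_sig (f i)))).
  - intros a [HYa Ha]. destruct (Hf _ Ha) as [i Hi]. now exists i.
  - exact (jointly_null_bigunion _ Hlarge Hg Hnull).
Qed.

Lemma good_restrict P Y c w (Z : T -> Prop) :
  good P Y c w -> jointly_pos P c w (fun a => Y a /\ Z a) -> good P (fun a => Y a /\ Z a) c w.
Proof.
  intros [Hpos [_ Hlarge]] HZ. split; [|split; [exact HZ | exact Hlarge]].
  destruct (pos_inhabited Hpos) as [a0 [_ [_ Ha0]]].
  apply (pos_mono (HZ _ (under_beta Ha0))). intros a _ [HY [Hf _]]. exact (conj HY Hf).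
Qed.

Lemma good_ext P P' Y c w : (forall e, P e <-> P' e) -> good P Y c w -> good P' Y c w.
Proof.
  intros HP [Hpos [Hj Hlarge]].
  assert (Hfits : forall a, fits P c w a -> fits P' c w a).
  { intros a [H1 H2]. split; intros e He; [apply H1 | apply H2]; apply HP, He. }
  split; [|split].
  - apply (pos_mono Hpos). intros a _ [HY Hf]. exact (conj HY (Hfits a Hf)).
  - intros v Hv. apply (pos_mono (Hj v (fun e He => Hv e (proj1 (HP e) He)))).
    intros a _ [HY [Hf Hx]]. split; [exact HY | split; [exact (Hfits a Hf)|]].
    intros e He. apply Hx, HP, He.
  - intros e He. apply Hlarge, HP, He.
Qed.

Lemma good_cofinal_map P Y c w e :
  good P Y c w -> P e -> ~ w e -> has_cofinal_map (c e) theta.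
Proof.
  intros [Hpos [Hj _]] He Hw.
  destruct (pos_inhabited Hpos) as [a0 [_ [_ Ha0]]].
  pose (b0 := exist _ (beta a0 e) (proj2 Ha0 e He Hw) : sg (c e)).
  exists (fun a : sg theta =>
    match excluded_middle_informative (fits P c w (proj1_sig a)) with
    | left Ha => exist _ (beta (proj1_sig a) e) (proj2 Ha e He Hw)
    | right _ => b0
    end).
  intros x Hx.
  pose (v := fun e' => if excluded_middle_informative (e = e') then x else beta a0 e').
  assert (Hv : under P c w v).
  { intros e' He' Hw'. unfold v. destruct (excluded_middle_informative _) as [<-|_].
    - exact Hx.
    - exact (proj2 Ha0 e' He' Hw'). }
  destruct (pos_inhabited (Hj v Hv)) as [a [Ha [_ [Hf Hex]]]].
  exists (exist _ a Ha). simpl.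
  destruct (excluded_middle_informative _) as [Hfa|Hn]; [|contradiction].
  left. specialize (Hex e He Hw). unfold v in Hex.
  destruct (excluded_middle_informative (e = e)) as [_|Hn]; [exact Hex | now destruct Hn].
Qed.

Lemma good_cf_between P Y c w e :
  good P Y c w -> P e -> ~ w e -> exists g, is_cf lt (c e) g /\ le lt sigma g /\ le lt g theta.
Proof.
  intros Hgood He Hw. exists (cf (c e)). split; [apply is_cf_cf|]. split.
  - apply not_lt_le. intros Hlt.
    exact (proj2 (proj2 Hgood) e He Hw _ Hlt _ (@cf_map_cofinal (c e))).
  - apply not_lt_le. intros Hlt.
    exact (proj2 (is_cf_cf (c e)) theta Hlt (good_cofinal_map _ Hgood He Hw)).
Qed.

Definition lower_values (k : T) (c : T -> T) (e : T) : T -> Prop :=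
  fun y => exists z, lt z k /\ y = c z /\ lt (c z) (c e).

Lemma good_sup_below k P Y c w : lt k sigma -> good P Y c w ->
  exists sp : T -> T, forall e, P e -> ~ w e ->
    is_sup lt (lower_values k c e) (sp e) /\ lt (sp e) (c e).
Proof.
  intros Hk [Hpos [_ Hlarge]].
  destruct (pos_inhabited Hpos) as [a0 [_ [_ Ha0]]].
  assert (Hsup : forall e, exists s, P e -> ~ w e ->
            is_sup lt (lower_values k c e) s /\ lt s (c e)).
  { intros e. destruct (classic (P e /\ ~ w e)) as [[He Hw]|Hn]; [|exists e; tauto].
    destruct (bounded_below_of_not_cofinal c (ex_intro _ _ (proj2 Ha0 e He Hw))
                (Hlarge e He Hw k Hk)) as [y [Hy Hbound]].
    destruct (exists_sup (lower_values k c e) (u := y)) as [s [Hs Hsy]].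
    - intros x [z [Hz [-> Hzl]]]. left. exact (Hbound z Hz Hzl).
    - exists s. intros _ _. exact (conj Hs (le_lt_trans Hsy Hy)). }
  destruct (choice _ Hsup) as [sp Hsp]. now exists sp.
Qed.

Lemma good_claim {k X Y c w} : lt k sigma -> (forall a, Y a -> X a) ->
  good (fun e => lt e k) Y c w ->
  let w' := fun e => lt e k /\ w e in
  let B := fun a => X a /\
    (forall e, lt e k -> w' e -> beta a e = c e) /\
    (forall e, lt e k -> ~ w' e ->
       (exists s, is_sup lt (lower_values k c e) s /\ lt s (beta a e)) /\ lt (beta a e) (c e)) in
  pos B /\
  (forall bp, (forall e, lt e k -> ~ w' e -> lt (bp e) (c e)) ->
     pos (fun a => B a /\ forall e, lt e k -> ~ w' e -> lt (bp e) (beta a e))).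
Proof.
  intros Hk HYX Hgood w' B.
  destruct (good_sup_below Hk Hgood) as [sp Hsp].
  assert (Hfree : forall e, ~ w' e -> lt e k -> ~ w e) by (intros e Hw' He Hw; now apply Hw').
  assert (HB : forall v, under (fun e => lt e k) c w v ->
             (forall e, lt e k -> ~ w e -> le lt (sp e) (v e)) ->
             pos (fun a => B a /\ exceeds (fun e => lt e k) w v a)).
  { intros v Hv Hle. apply (pos_mono (proj1 (proj2 Hgood) v Hv)).
    intros a _ [HYa [[Hfw Hfn] Hx]]. split; [|exact Hx]. split; [exact (HYX a HYa)|]. split.
    - intros e He [_ Hw]. exact (Hfw e He Hw).
    - intros e He Hw'. pose proof (Hfree e Hw' He) as Hw.
      split; [|exact (Hfn e He Hw)]. exists (sp e). split; [exact (proj1 (Hsp e He Hw))|].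
      exact (le_lt_trans (Hle e He Hw) (Hx e He Hw)). }
  assert (Hsp_under : under (fun e => lt e k) c w sp)
    by (intros e He Hw; exact (proj2 (Hsp e He Hw))).
  split.
  - apply (pos_mono (HB sp Hsp_under (fun e _ _ => le_refl _))). intros a _ [HBa _]. exact HBa.
  - intros bp Hbp.
    assert (Hbp_under : under (fun e => lt e k) c w bp).
    { intros e He Hw. apply Hbp; [exact He|]. intros [_ H]. exact (Hw H). }
    apply (pos_mono (HB _ (under_vmax Hsp_under Hbp_under) (fun e _ _ => vmax_l sp bp e))).
    intros a _ [HBa Hx]. split; [exact HBa|]. intros e He Hw'.
    exact (le_lt_trans (vmax_r sp bp e) (Hx e He (Hfree e Hw' He))).
Qed.

Definition upd (c : T -> T) (e u : T) : T -> T :=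
  fun x => if excluded_middle_informative (e = x) then u else c x.

Lemma upd_same c e u : upd c e u e = u.
Proof.
  unfold upd. destruct (excluded_middle_informative (e = e)) as [_|H]; [reflexivity | now destruct H].
Qed.

Lemma upd_other c e u x : e <> x -> upd c e u x = c x.
Proof.
  intros H. unfold upd. destruct (excluded_middle_informative (e = x)); [contradiction | reflexivity].
Qed.

(** * Finitely many coordinates *)

Section AddCoordinate.
Variables (P : T -> Prop) (c : T -> T) (w : T -> Prop) (e : T).
Hypothesis HnP : ~ P e.

Let neq_of_P x : P x -> e <> x.
Proof. intros Hx <-. exact (HnP Hx). Qed.

Lemma good_fixed_coord Y u :
  good P Y c w -> jointly_pos P c w (fun a => Y a /\ beta a e = u) ->
  good (fun x => e = x \/ P x) Y (upd c e u) (fun x => e = x \/ w x).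
Proof.
  intros [Hpos [_ Hlarge]] Hfix.
  destruct (pos_inhabited Hpos) as [a0 [_ [_ Ha0]]].
  assert (Hfits : forall a, fits P c w a -> beta a e = u ->
            fits (fun x => e = x \/ P x) (upd c e u) (fun x => e = x \/ w x) a).
  { intros a [H1 H2] Hu. split.
    - intros x [<- | Hx] Hw; [now rewrite upd_same|].
      rewrite upd_other by exact (neq_of_P Hx).
      destruct Hw as [<- | Hw]; [destruct (HnP Hx) | exact (H1 x Hx Hw)].
    - intros x [<- | Hx] Hw; [destruct Hw; now left|].
      rewrite upd_other by exact (neq_of_P Hx).
      apply H2; [exact Hx|]. intros Hw'. apply Hw. now right. }
  split; [|split].
  - apply (pos_mono (Hfix _ (under_beta Ha0))). intros a _ [[HY Hu] [Hf _]].
    exact (conj HY (Hfits a Hf Hu)).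
  - intros v Hv.
    assert (HvP : under P c w v).
    { intros x Hx Hw. rewrite <- (upd_other c u (neq_of_P Hx)). apply Hv; [now right|].
      intros [E | Hw']; [exact (neq_of_P Hx E) | exact (Hw Hw')]. }
    apply (pos_mono (Hfix _ HvP)). intros a _ [[HY Hu] [Hf Hx]].
    split; [exact HY | split; [exact (Hfits a Hf Hu)|]].
    intros x [<- | HPx] Hw; [destruct Hw; now left|].
    apply Hx; [exact HPx|]. intros Hw'. apply Hw. now right.
  - intros x [<- | Hx] Hw; [destruct Hw; now left|].
    rewrite upd_other by exact (neq_of_P Hx). apply Hlarge; [exact Hx|].
    intros Hw'. apply Hw. now right.
Qed.

Lemma good_free_coord Y u :
  good P Y c w ->
  jointly_pos P c w (fun a => Y a /\ lt (beta a e) u) ->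
  (forall g, lt g u -> jointly_pos P c w (fun a => Y a /\ lt g (beta a e) /\ lt (beta a e) u)) ->
  (forall g, lt g sigma -> forall f : sg g -> sg u, ~ cofinal_map f) ->
  good (fun x => e = x \/ P x) Y (upd c e u) (fun x => e <> x /\ w x).
Proof.
  intros [Hpos [_ Hlarge]] Hbelow Habove Hu.
  destruct (pos_inhabited Hpos) as [a0 [_ [_ Ha0]]].
  assert (Hfits : forall a, fits P c w a -> lt (beta a e) u ->
            fits (fun x => e = x \/ P x) (upd c e u) (fun x => e <> x /\ w x) a).
  { intros a [H1 H2] Hlt. split.
    - intros x [<- | Hx] [Hne Hw]; [now destruct Hne|].
      rewrite upd_other by exact Hne. exact (H1 x Hx Hw).
    - intros x [<- | Hx] Hw; [now rewrite upd_same|].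
      rewrite upd_other by exact (neq_of_P Hx). apply H2; [exact Hx|].
      intros Hw'. apply Hw. exact (conj (neq_of_P Hx) Hw'). }
  split; [|split].
  - apply (pos_mono (Hbelow _ (under_beta Ha0))). intros a _ [[HY Hlt] [Hf _]].
    exact (conj HY (Hfits a Hf Hlt)).
  - intros v Hv.
    assert (Hve : lt (v e) u).
    { rewrite <- (upd_same c e u). apply Hv; [now left|]. intros [Hne _]. now destruct Hne. }
    assert (HvP : under P c w v).
    { intros x Hx Hw. rewrite <- (upd_other c u (neq_of_P Hx)). apply Hv; [now right|].
      intros [_ Hw']. exact (Hw Hw'). }
    apply (pos_mono (Habove _ Hve _ HvP)). intros a _ [[HY [Hgt Hlt]] [Hf Hx]].
    split; [exact HY | split; [exact (Hfits a Hf Hlt)|]].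
    intros x [<- | HPx] Hw; [exact Hgt|].
    apply Hx; [exact HPx|]. intros Hw'. apply Hw. exact (conj (neq_of_P HPx) Hw').
  - intros x [<- | Hx] Hw.
    + rewrite upd_same. exact Hu.
    + rewrite upd_other by exact (neq_of_P Hx). apply Hlarge; [exact Hx|].
      intros Hw'. apply Hw. exact (conj (neq_of_P Hx) Hw').
Qed.

(* Let [u] be least such that, inside some good [Y' <= Y], the [e]-th coordinate jointly
   stays [<= u].  Either [beta _ e = u] is jointly positive and [e] joins [w], or [u] has
   cofinality [>= sigma] and [e] is a free coordinate with bound [u]; a smaller cofinality
   would push the bound below [u]. *)
Lemma good_add_coord Y top : small_type bool ->
  (forall a, lt a theta -> lt (beta a e) top) -> good P Y c w ->
  exists Y' c' w', (forall a, Y' a -> Y a) /\ good (fun x => e = x \/ P x) Y' c' w'.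
Proof.
  intros Hbool Htop HY.
  pose (R := fun u => exists Y', (forall a, Y' a -> Y a) /\ good P Y' c w /\
                        jointly_null P c w (fun a => Y' a /\ lt u (beta a e))).
  assert (Rtop : R top).
  { exists Y. split; [auto | split; [exact HY|]].
    destruct (pos_inhabited (proj1 HY)) as [a0 [_ [_ Ha0]]].
    apply jointly_null_of_empty; [now exists a0|].
    intros a Ha [_ Hlt]. exact (lt_asym (Htop a Ha) Hlt). }
  destruct (exists_least R (ex_intro _ top Rtop)) as [u [[Y1 [HY1 [Hgood N0]]] Hmin]].
  assert (Hfits1 : exists a, fits P c w a).
  { destruct (pos_inhabited (proj1 Hgood)) as [a [_ [_ Ha]]]. now exists a. }
  destruct (classic (jointly_null P c w (fun a => Y1 a /\ beta a e = u))) as [N1|Hfix].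
  2:{ exists Y1, (upd c e u), (fun x => e = x \/ w x). split; [exact HY1|].
      apply (good_fixed_coord Hgood). now apply jointly_pos_iff. }
  assert (N01 : jointly_null P c w (fun a => (Y1 a /\ lt u (beta a e)) \/ (Y1 a /\ beta a e = u)))
    by exact (jointly_null_union Hbool N0 N1).
  assert (Hsplit : forall (Z : T -> Prop) a, Z a -> Y1 a ->
            (Z a /\ lt (beta a e) u) \/ (Y1 a /\ lt u (beta a e)) \/ (Y1 a /\ beta a e = u)).
  { intros Z a HZ HYa. destruct (lt_trichotomy (beta a e) u) as [h|[h|h]]; auto. }
  assert (Hbelow : jointly_pos P c w (fun a => Y1 a /\ lt (beta a e) u)).
  { apply (jointly_pos_diff Hbool (proj1 (proj2 Hgood)) N01).
    intros a HYa. exact (Hsplit Y1 a HYa HYa). }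
  destruct (classic (exists g, lt g sigma /\ has_cofinal_map u g)) as [[g [Hg [f Hf]]]|Hlarge].
  - destruct (jointly_pos_cofinal_piece Y1 (fun a => beta a e) (proj2 (proj2 Hgood)) Hg Hf Hbelow)
      as [i Hi].
    exfalso. apply (le_not_lt (x := u) (y := proj1_sig (f i)));
      [apply Hmin | exact (proj2_sig (f i))].
    exists (fun a => Y1 a /\ le lt (beta a e) (proj1_sig (f i))). split; [|split].
    + intros a [HYa _]. exact (HY1 a HYa).
    + exact (good_restrict _ Hgood Hi).
    + apply jointly_null_of_empty; [exact Hfits1|].
      intros a _ [[_ Hle] Hlt]. exact (le_not_lt Hle Hlt).
  - exists Y1, (upd c e u), (fun x => e <> x /\ w x). split; [exact HY1|].
    apply (good_free_coord Hgood Hbelow).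
    + intros g Hg. assert (HM : jointly_pos P c w (fun a => Y1 a /\ lt g (beta a e))).
      { apply jointly_pos_iff. intros Hn.
        apply (le_not_lt (x := u) (y := g)); [apply Hmin | exact Hg].
        exists Y1. exact (conj HY1 (conj Hgood Hn)). }
      apply (jointly_pos_diff Hbool HM N01). intros a [HYa Hga].
      destruct (Hsplit (fun a => lt g (beta a e)) a Hga HYa) as [[h1 h2]|h]; [left|right]; tauto.
    + intros g Hg f Hf. apply Hlarge. exists g. split; [exact Hg|]. now exists f.
Qed.

End AddCoordinate.

Lemma exists_good_list (K : list T) X top : small_type bool -> pos X ->
  (forall e a, In e K -> lt a theta -> lt (beta a e) top) ->
  exists Y c w, (forall a, Y a -> X a) /\ good (fun e => In e K) Y c w.
Proof.
  intros Hbool HX Htop. induction K as [|e K IH].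
  - exists X, (fun e => e), (fun _ => False). split; [auto|].
    assert (Hfits : forall a, fits (fun e => In e nil) (fun e => e) (fun _ => False) a)
      by (intros a; split; intros _ []).
    split; [|split].
    + apply (pos_mono HX). intros a _ Ha. exact (conj Ha (Hfits a)).
    + intros v _. apply (pos_mono HX). intros a _ Ha.
      split; [exact Ha|]. split; [apply Hfits|]. intros _ [].
    + intros _ [].
  - destruct IH as [Y [c [w [HYX Hgood]]]].
    { intros e' a He' Ha. apply Htop; [right|]; assumption. }
    destruct (classic (In e K)) as [Hin|Hnin].
    + exists Y, c, w. split; [exact HYX|]. apply (good_ext (P := fun x => In x K)); [|exact Hgood].
      intros x. simpl. split; [auto|]. intros [<- | H]; assumption.
    + destruct (good_add_coord Hnin Hbool (fun a Ha => Htop e a (or_introl eq_refl) Ha) Hgood)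
        as [Y' [c' [w' [HY' Hgood']]]].
      exists Y', c', w'. split; [auto | exact Hgood'].
Qed.

(** * Sets of size less than [sigma] *)

Section Infinite.
Variable kappa : T.
Variable kseq : nat -> T.
Hypothesis kseq_lt : forall n, lt (kseq n) kappa.
Hypothesis kseq_increasing : forall n m, (n < m)%nat -> lt (kseq n) (kseq m).
Hypothesis kappa_lt_sigma : lt kappa sigma.
Hypothesis sigma_regular : is_cf lt sigma sigma.
Hypothesis Hpow : forall a, lt a sigma -> card_lt (sg kappa -> sg a) (sg sigma).

Definition kpt (n : nat) : sg kappa := exist _ (kseq n) (kseq_lt n).

Lemma kseq_inj n m : kseq n = kseq m -> n = m.
Proof.
  intros E. destruct (PeanoNat.Nat.lt_trichotomy n m) as [h|[h|h]]; [| exact h |];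
    pose proof (kseq_increasing h) as H; rewrite E in H; destruct (lt_irrefl H).
Qed.

Lemma small_type_fun (A : Type) : small_type A -> small_type (sg kappa -> A).
Proof.
  intros [g [Hg [J HJ]]]. apply (small_type_inj (B := sg kappa -> sg g)).
  - exists (fun f k => J (f k)). intros f f' E. apply functional_extensionality. intros k.
    apply HJ. exact (f_equal (fun h => h k) E).
  - exact (card_lt_seg_inj (Hpow Hg)).
Qed.

Lemma small_type_prod (A B : Type) : small_type A -> small_type B -> small_type (A * B).
Proof.
  intros [a [Ha HA]] [b [Hb HB]].
  assert (Hm : exists m, lt m sigma /\ card_le A (sg m) /\ card_le B (sg m)).
  { destruct (classic (lt a b)) as [Hab|Hab].
    - exists b. split; [exact Hb|]. split; [|exact HB].
      exact (card_le_trans HA (card_le_seg (or_introl Hab))).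
    - exists a. split; [exact Ha|]. split; [exact HA|].
      exact (card_le_trans HB (card_le_seg (not_lt_le Hab))). }
  destruct Hm as [m [Hm [[J1 H1] [J2 H2]]]].
  apply (small_type_inj (B := sg kappa -> sg m)); [|exact (small_type_fun (small_type_seg Hm))].
  exists (fun p k => if excluded_middle_informative (proj1_sig k = kseq 0)
                     then J1 (fst p) else J2 (snd p)).
  intros [x y] [x' y'] E.
  pose proof (f_equal (fun h => h (kpt 0)) E) as E0.
  pose proof (f_equal (fun h => h (kpt 1)) E) as E1. simpl in E0, E1.
  destruct (excluded_middle_informative (kseq 0 = kseq 0)) as [_|Hn]; [|now destruct Hn].
  destruct (excluded_middle_informative (kseq 1 = kseq 0)) as [Hn|_]; [discriminate (kseq_inj Hn)|].
  f_equal; [exact (H1 _ _ E0) | exact (H2 _ _ E1)].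
Qed.

Lemma small_type_two : small_type bool.
Proof.
  exact (small_type_bool sigma_regular (lt_trans (kseq_lt 1) kappa_lt_sigma)
                         (kseq_increasing PeanoNat.Nat.lt_0_1)).
Qed.

Lemma small_type_sigT {I : Type} {B : I -> Type} :
  small_type I -> (forall i, small_type (B i)) -> small_type {i : I & B i}.
Proof.
  intros [a [Ha [J HJ]]] HB. destruct (choice _ HB) as [bd Hbd].
  pose (F := fun z => match excluded_middle_informative (exists i, proj1_sig (J i) = z) with
                      | left H => bd (proj1_sig (constructive_indefinite_description _ H))
                      | right _ => z
                      end).
  destruct (bounded_below_of_not_cofinal (k := a) F (ex_intro _ a Ha)
              (fun f Hf => proj2 sigma_regular a Ha (ex_intro _ f Hf))) as [y [Hy Hbound]].
  assert (Hbd_y : forall i, lt (bd i) y).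
  { intros i. assert (HF : F (proj1_sig (J i)) = bd i).
    { unfold F. destruct (excluded_middle_informative _) as [H|H]; [|destruct H; eauto].
      destruct (constructive_indefinite_description _ H) as [i' Hi']. simpl.
      now rewrite (HJ _ _ (sig_eq Hi')). }
    rewrite <- HF. apply (Hbound _ (proj2_sig (J i))). rewrite HF. exact (proj1 (Hbd i)). }
  destruct (dependent_choice (fun i => proj2 (Hbd i))) as [emb Hemb].
  apply (small_type_inj (B := I * sg y)).
  - exists (fun p => (projT1 p, exist _ (proj1_sig (emb (projT1 p) (projT2 p)))
                       (lt_trans (proj2_sig (emb _ _)) (Hbd_y (projT1 p))) : sg y)).
    intros [i b] [i' b'] E. simpl in E. injection E as <- E.
    rewrite (Hemb i _ _ (sig_eq E)).
    reflexivity.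
  - apply small_type_prod; [exists a; split; [exact Ha | now exists J] | exact (small_type_seg Hy)].
Qed.

Definition small (S : T -> Prop) : Prop := small_type {x | S x}.

Lemma small_mono {S S' : T -> Prop} : small S -> (forall x, S' x -> S x) -> small S'.
Proof.
  intros H Hsub. apply (small_type_inj (B := {x | S x})); [|exact H].
  exists (fun x => exist _ (proj1_sig x) (Hsub _ (proj2_sig x))). intros x y E.
  apply sig_eq. exact (f_equal (@proj1_sig _ _) E).
Qed.

Lemma small_image (A : Type) (F : A -> T) : small_type A -> small (fun x => exists a, x = F a).
Proof.
  intros H. apply (small_type_inj (B := A)); [|exact H].
  destruct (choice (fun (x : {x | exists a, x = F a}) a => proj1_sig x = F a)
                   (fun x => proj2_sig x)) as [pre Hpre].
  exists pre. intros x y E. apply sig_eq. rewrite (Hpre x), (Hpre y), E. reflexivity.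
Qed.

Lemma small_bigunion (I : Type) (S : I -> T -> Prop) :
  small_type I -> (forall i, small (S i)) -> small (fun x => exists i, S i x).
Proof.
  intros HI HS.
  apply (small_mono (small_image (fun p : {i : I & {x | S i x}} => proj1_sig (projT2 p))
                                 (small_type_sigT HI HS))).
  intros x [i Hx]. exists (existT _ i (exist _ x Hx)). reflexivity.
Qed.

Lemma small_union (S1 S2 : T -> Prop) : small S1 -> small S2 -> small (fun x => S1 x \/ S2 x).
Proof.
  intros H1 H2.
  apply (small_mono (small_bigunion (fun b : bool => if b then S1 else S2) small_type_two
                                    (fun b => if b as b0 return small (if b0 then S1 else S2)
                                              then H1 else H2))).
  intros x [h|h]; [exists true | exists false]; exact h.
Qed.

Lemma small_singleton x : small (fun y => y = x).
Proof.
  apply (small_type_inj (B := sg kappa)); [|exact (small_type_seg kappa_lt_sigma)].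
  exists (fun _ => kpt 0). intros p q _. apply sig_eq. now rewrite (proj2_sig p), (proj2_sig q).
Qed.

Lemma card_le_list (A : Type) : card_le (list A) (sg kappa -> option A).
Proof.
  exists (fun l k => match excluded_middle_informative (exists n, proj1_sig k = kseq n) with
                     | left H => nth_error l (proj1_sig (constructive_indefinite_description _ H))
                     | right _ => None
                     end).
  intros l l' E. apply nth_error_ext. intros n.
  pose proof (f_equal (fun h => h (kpt n)) E) as En. simpl in En.
  destruct (excluded_middle_informative _) as [H|H]; [|destruct H; now exists n].
  destruct (constructive_indefinite_description _ H) as [n' Hn']. simpl in En.
  destruct (kseq_inj Hn'). exact En.
Qed.

Lemma small_type_list : small_type (list (sg kappa)).
Proof.
  apply (small_type_inj (card_le_list (sg kappa))), small_type_fun.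
  apply (small_type_inj (B := sg kappa * bool)).
  - exists (fun o => match o with Some k => (k, true) | None => (kpt 0, false) end).
    intros [k|] [k'|] E; congruence.
  - exact (small_type_prod (small_type_seg kappa_lt_sigma) small_type_two).
Qed.

(* If every nonzero ordinal below [sigma] had cofinality [<= kappa], all of them would inject
   into lists over [kappa], hence into a least universal [g < sigma]; but then
   [g^kappa <= g], which König's inequality forbids. *)
Lemma exists_cf_above_kappa :
  exists d, lt d sigma /\ (exists x, lt x d) /\ forall f : sg kappa -> sg d, ~ cofinal_map f.
Proof.
  apply NNPP. intros Hn.
  assert (Hcof : forall y, lt y sigma -> (exists x, lt x y) ->
                 exists f : sg kappa -> sg y, cofinal_map f).
  { intros y Hy Hne. apply NNPP. intros Hnf. apply Hn. exists y. split; [exact Hy|].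
    split; [exact Hne|]. intros f Hf. apply Hnf. eauto. }
  pose (U := fun g => lt g sigma /\ forall y, lt y sigma -> card_le (sg y) (sg g)).
  assert (HU : exists g, U g).
  { destruct small_type_list as [g0 [Hg0 Jl]]. exists g0. split; [exact Hg0|]. intros y Hy.
    destruct (seg_inj_list Hcof Hy) as [phi [Hphi _]].
    exact (card_le_trans (ex_intro _ phi Hphi) Jl). }
  destruct (exists_least U HU) as [g [[Hg Huniv] Hmin]].
  assert (Hprod : card_le (sg g * bool) (sg g)).
  { destruct (small_type_prod (small_type_seg Hg) small_type_two) as [g' [Hg' H']].
    exact (card_le_trans H' (Huniv g' Hg')). }
  assert (Hne : exists x, lt x g).
  { destruct (Huniv _ (lt_trans (kseq_lt 1) kappa_lt_sigma)) as [J _].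
    exists (proj1_sig (J (exist _ (kseq 0) (kseq_increasing PeanoNat.Nat.lt_0_1)))).
    apply proj2_sig. }
  destruct (Hcof g Hg Hne) as [f Hf].
  refine (no_cofinal_map_of_power _ _ Hf).
  - destruct (small_type_fun (small_type_seg Hg)) as [g' [Hg' H']].
    exact (card_le_trans H' (Huniv g' Hg')).
  - intros x Hx Hle. apply (le_not_lt (x := g) (y := x)); [|exact Hx].
    apply Hmin. split; [exact (lt_trans Hx Hg)|]. intros y Hy.
    exact (card_le_trans (Huniv y Hy) (card_le_closed_seg (card_le_trans Hprod Hle))).
Qed.

(** * Infinitely many coordinates *)

Section Closure.
Variable top : T.
Variable X : T -> Prop.

Local Notation Pk := (fun e => lt e kappa).

Definition wset (bits : T -> bool) : T -> Prop := fun e => bits e = true.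

(* Labels are normalised off [kappa], so that they are determined by their values on [kappa]. *)
Definition normal (c : T -> T) (bits : T -> bool) : Prop :=
  forall e, ~ lt e kappa -> c e = top /\ bits e = false.

Definition labels (S : T -> Prop) : Type :=
  {p : (T -> T) * (T -> bool) | (forall e, lt e kappa -> S (fst p e)) /\ normal (fst p) (snd p)}.

Definition witness (c : T -> T) (bits : T -> bool) : T -> T :=
  match excluded_middle_informative (jointly_null Pk c (wset bits) X) with
  | left H => proj1_sig (constructive_indefinite_description _ H)
  | right _ => fun _ => top
  end.

Lemma witness_spec c bits : jointly_null Pk c (wset bits) X ->
  under Pk c (wset bits) (witness c bits) /\
  null (fun a => X a /\ fits Pk c (wset bits) a /\ exceeds Pk (wset bits) (witness c bits) a).
Proof.
  intros H. unfold witness. destruct (excluded_middle_informative _) as [H'|H']; [|contradiction].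
  exact (proj2_sig (constructive_indefinite_description _ H')).
Qed.

Inductive closure : T -> T -> Prop :=
  | closure_top j : closure j top
  | closure_mono j j' x : lt j' j -> closure j' x -> closure j x
  | closure_witness j j' c bits e : lt j' j -> (forall e', lt e' kappa -> closure j' (c e')) ->
      normal c bits -> lt e kappa -> closure j (witness c bits e)
  | closure_cofinal j j' b (i : sg (cf b)) : lt j' j -> closure j' b -> lt (cf b) sigma ->
      closure j (proj1_sig (cf_map b i)).

Lemma small_type_labels S : small S -> small_type (labels S).
Proof.
  intros H.
  apply (small_type_inj (B := ((sg kappa -> {x | S x}) * (sg kappa -> bool))%type)).
  - exists (fun p : labels S =>
      ((fun k => exist S (fst (proj1_sig p) (proj1_sig k)) (proj1 (proj2_sig p) _ (proj2_sig k))),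
       (fun k => snd (proj1_sig p) (proj1_sig k)))).
    intros [[c b] [Hc Hn]] [[c' b'] [Hc' Hn']] E. apply sig_eq. simpl in *.
    injection E as Ec Eb.
    f_equal; apply functional_extensionality; intros e;
      destruct (classic (lt e kappa)) as [He|He].
    + exact (f_equal (fun f => proj1_sig (f (exist _ e He))) Ec).
    + now rewrite (proj1 (Hn e He)), (proj1 (Hn' e He)).
    + exact (f_equal (fun f => f (exist _ e He)) Eb).
    + now rewrite (proj2 (Hn e He)), (proj2 (Hn' e He)).
  - apply small_type_prod; apply small_type_fun; [exact H | exact small_type_two].
Qed.

Lemma small_witnesses S : small S ->
  small (fun x => exists (p : labels S) e,
           lt e kappa /\ x = witness (fst (proj1_sig p)) (snd (proj1_sig p)) e).
Proof.
  intros H.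
  apply (small_mono (small_image (fun q : labels S * sg kappa =>
            witness (fst (proj1_sig (fst q))) (snd (proj1_sig (fst q))) (proj1_sig (snd q)))
            (small_type_prod (small_type_labels H) (small_type_seg kappa_lt_sigma)))).
  intros x [p [e [He ->]]]. exists (p, exist _ e He). reflexivity.
Qed.

Lemma small_cofinal_points S : small S ->
  small (fun x => exists b (i : sg (cf b)), S b /\ lt (cf b) sigma /\ x = proj1_sig (cf_map b i)).
Proof.
  intros H.
  apply (small_mono (small_image
            (fun p : {b : {b | S b /\ lt (cf b) sigma} & sg (cf (proj1_sig b))} =>
               proj1_sig (cf_map (proj1_sig (projT1 p)) (projT2 p)))
            (small_type_sigT (small_mono H (fun b Hb => proj1 Hb))
                             (fun b => small_type_seg (proj2 (proj2_sig b)))))).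
  intros x [b [i [Hb [Hcf ->]]]]. exists (existT _ (exist _ b (conj Hb Hcf)) i). reflexivity.
Qed.

Lemma closure_small j : lt j sigma -> small (closure j).
Proof.
  induction j as [j IH] using (well_founded_ind lt_wf). intros Hj.
  pose (stage := fun (j' : sg j) x =>
    closure (proj1_sig j') x \/
    (exists (p : labels (closure (proj1_sig j'))) e,
       lt e kappa /\ x = witness (fst (proj1_sig p)) (snd (proj1_sig p)) e) \/
    (exists b (i : sg (cf b)), closure (proj1_sig j') b /\ lt (cf b) sigma /\
       x = proj1_sig (cf_map b i))).
  assert (Hstage : forall j', small (stage j')).
  { intros [j' Hj']. simpl. pose proof (IH j' Hj' (lt_trans Hj' Hj)) as Hs.
    exact (small_union Hs (small_union (small_witnesses Hs) (small_cofinal_points Hs))). }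
  apply (small_mono (small_union (small_singleton top)
                                 (small_bigunion stage (small_type_seg Hj) Hstage))).
  intros x Hx. destruct Hx as [|j0 j' x Hj' Hx|j0 j' c bits e Hj' Hc Hn He|j0 j' b i Hj' Hb Hcf].
  - now left.
  - right. exists (exist _ j' Hj'). now left.
  - right. exists (exist _ j' Hj'). right; left.
    exists (exist _ (c, bits) (conj Hc Hn)), e. now split.
  - right. exists (exist _ j' Hj'). right; right. now exists b, i.
Qed.

Lemma closure_entry j x : closure j x ->
  x = top \/ exists j', lt j' j /\ forall j'', lt j' j'' -> closure j'' x.
Proof.
  intros Hx. destruct Hx as [|j0 j' x Hj' Hx|j0 j' c bits e Hj' Hc Hn He|j0 j' b i Hj' Hb Hcf];
    [now left | right .. ]; exists j'; (split; [exact Hj'|]); intros j'' Hj''.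
  - exact (closure_mono Hj'' Hx).
  - exact (closure_witness Hj'' Hc Hn He).
  - exact (closure_cofinal i Hj'' Hb Hcf).
Qed.

Hypothesis Htop : forall a e, lt a theta -> lt e kappa -> lt (beta a e) top.
Hypothesis HX : pos X.

Section Stage.
Variable d : T.
Hypothesis d_lt_sigma : lt d sigma.
Hypothesis d_nonzero : exists x, lt x d.
Hypothesis d_cf_large : forall f : sg kappa -> sg d, ~ cofinal_map f.

Lemma closure_bounded_stage (c : T -> T) : (forall e, lt e kappa -> closure d (c e)) ->
  exists m, lt m d /\ forall e, lt e kappa -> closure m (c e).
Proof.
  intros Hc.
  assert (Hentry : forall k : sg kappa, exists j : sg d,
            c (proj1_sig k) = top \/
            forall j', lt (proj1_sig j) j' -> closure j' (c (proj1_sig k))).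
  { intros [e He]. simpl. destruct (closure_entry (Hc e He)) as [Ht|[j [Hj Hin]]].
    - destruct d_nonzero as [x0 Hx0]. exists (exist _ x0 Hx0). now left.
    - exists (exist _ j Hj). now right. }
  destruct (choice _ Hentry) as [st Hst].
  destruct (not_cofinal_bounded (@d_cf_large st)) as [m [Hm Hbound]].
  exists m. split; [exact Hm|]. intros e He.
  destruct (Hst (exist _ e He)) as [Ht|Hin]; simpl in *.
  - rewrite Ht. apply closure_top.
  - exact (Hin m (Hbound (exist _ e He))).
Qed.

Definition nearest (y : T) : T :=
  match excluded_middle_informative (exists x, closure d x /\ le lt y x) with
  | left H => least _ H
  | right _ => top
  end.

Lemma nearest_spec y : le lt y top ->
  closure d (nearest y) /\ le lt y (nearest y) /\
  forall x, closure d x -> le lt y x -> le lt (nearest y) x.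
Proof.
  intros Hy. unfold nearest. destruct (excluded_middle_informative _) as [H|H].
  - destruct (least_spec _ H) as [[Hc Hle] Hmin]. split; [exact Hc|]. split; [exact Hle|].
    intros x Hx Hyx. exact (Hmin x (conj Hx Hyx)).
  - destruct H. exists top. split; [apply closure_top | exact Hy].
Qed.

Definition label (a : T) : (T -> T) * (T -> bool) :=
  (fun e => if excluded_middle_informative (lt e kappa) then nearest (beta a e) else top,
   fun e => if excluded_middle_informative (lt e kappa /\ beta a e = nearest (beta a e))
            then true else false).

Lemma label_coord a e : lt e kappa -> fst (label a) e = nearest (beta a e).
Proof.
  intros He. simpl. destruct (excluded_middle_informative _); [reflexivity | contradiction].
Qed.

Lemma label_in_labels a : lt a theta ->
  (forall e, lt e kappa -> closure d (fst (label a) e)) /\ normal (fst (label a)) (snd (label a)).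
Proof.
  intros Ha. split.
  - intros e He. rewrite (label_coord a He). apply nearest_spec. left. exact (Htop Ha He).
  - intros e He. simpl. split.
    + destruct (excluded_middle_informative _); [contradiction | reflexivity].
    + destruct (excluded_middle_informative _) as [[h _]|_]; [contradiction | reflexivity].
Qed.

Lemma label_fits a : lt a theta -> fits Pk (fst (label a)) (wset (snd (label a))) a.
Proof.
  intros Ha. split; intros e He Hw; rewrite (label_coord a He); unfold wset in Hw; simpl in Hw.
  - destruct (excluded_middle_informative _) as [[_ E]|_]; [exact E | discriminate].
  - apply le_neq_lt; [apply nearest_spec; left; exact (Htop Ha He)|]. intros E. apply Hw.
    destruct (excluded_middle_informative _) as [_|Hn]; [reflexivity | destruct Hn; now split].
Qed.

Lemma label_nearest a e x : lt a theta -> lt e kappa -> closure d x ->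
  lt x (fst (label a) e) -> lt x (beta a e).
Proof.
  intros Ha He Hx Hlt. rewrite (label_coord a He) in Hlt. apply not_le_lt. intros Hle.
  exact (le_not_lt (proj2 (proj2 (nearest_spec (or_introl (Htop Ha He)))) x Hx Hle) Hlt).
Qed.

Lemma exists_pos_label : exists p : labels (closure d),
  pos (fun a => lt a theta /\ X a /\ label a = proj1_sig p).
Proof.
  apply NNPP. intros Hn. apply HX.
  apply (@null_mono (fun a => exists p : labels (closure d),
                                lt a theta /\ X a /\ label a = proj1_sig p)).
  - apply null_bigunion; [exact (small_type_labels (closure_small d_lt_sigma))|].
    intros p. apply NNPP. intros Hp. apply Hn. now exists p.
  - intros a Ha HXa. destruct (label_in_labels Ha) as [H1 H2].
    exists (exist _ (label a) (conj H1 H2)). now split.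
Qed.

(* The positive label class [A] shows that [X] is good: a witness of joint nullity, or a
   cofinal sequence of small length, would lie in [closure d] strictly between the points of
   [A] and their labels. *)
Lemma good_of_label : exists c bits, good Pk X c (wset bits).
Proof.
  destruct exists_pos_label as [[[c bits] [Hc Hn]] HA]. simpl in Hc, Hn, HA.
  pose (A := fun a => lt a theta /\ X a /\ label a = (c, bits)).
  assert (HAfits : forall a, A a -> fits Pk c (wset bits) a).
  { intros a [Ha [_ E]]. pose proof (label_fits Ha) as H. now rewrite E in H. }
  assert (HAnear : forall a e x, A a -> lt e kappa -> closure d x -> lt x (c e) -> lt x (beta a e)).
  { intros a e x [Ha [_ E]] He Hx Hlt. apply (label_nearest Ha He Hx). now rewrite E. }
  destruct (closure_bounded_stage c Hc) as [m [Hm Hcm]].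
  exists c, bits. split; [|split].
  - apply (pos_mono HA). intros a _ HAa. exact (conj (proj1 (proj2 HAa)) (HAfits a HAa)).
  - apply jointly_pos_iff. intros Hnull. destruct (witness_spec Hnull) as [Hw Hwnull].
    apply HA. apply (null_mono Hwnull). intros a _ HAa.
    split; [exact (proj1 (proj2 HAa))|]. split; [exact (HAfits a HAa)|].
    intros e He Hwe. apply (HAnear a e _ HAa He); [|exact (Hw e He Hwe)].
    exact (closure_witness Hm Hcm Hn He).
  - intros e He Hwe g Hg f Hf.
    destruct (pos_inhabited HA) as [a [_ HAa]].
    destruct (cf_map_cofinal (proj2 (HAfits a HAa) e He Hwe)) as [i Hi].
    assert (Hcf : lt (cf (c e)) sigma) by exact (le_lt_trans (cf_le Hf) Hg).
    apply (le_not_lt Hi). apply (HAnear a e _ HAa He); [|exact (proj2_sig (cf_map (c e) i))].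
    exact (closure_cofinal i Hm (Hcm e He) Hcf).
Qed.

End Stage.

Lemma exists_good_infinite : exists c w, good Pk X c w.
Proof.
  destruct exists_cf_above_kappa as [d [Hd [Hne Hcf]]].
  destruct (good_of_label Hd Hne Hcf) as [c [bits Hgood]]. now exists c, (wset bits).
Qed.

End Closure.

End Infinite.

Lemma exists_good {kappa top X} :
  is_cf lt sigma sigma -> lt kappa sigma -> small_type bool ->
  (forall a, lt a sigma -> card_lt (sg kappa -> sg a) (sg sigma)) ->
  (forall a e, lt a theta -> lt e kappa -> lt (beta a e) top) -> pos X ->
  exists Y c w, (forall a, Y a -> X a) /\ good (fun e => lt e kappa) Y c w.
Proof.
  intros Hreg Hk Hbool Hpow Htop HX.
  destruct (finite_or_omega kappa) as [[K HK]|[f [Hf Hmono]]].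
  - destruct (exists_good_list K Hbool HX (top := top)) as [Y [c [w [HYX Hgood]]]].
    { intros e a He Ha. exact (Htop a e Ha (proj1 (HK e) He)). }
    exists Y, c, w. split; [exact HYX | exact (good_ext _ HK Hgood)].
  - destruct (@exists_good_infinite kappa f Hf Hmono Hk Hreg Hpow top X Htop HX) as [c [w Hgood]].
    exists X, c, w. split; [auto | exact Hgood].
Qed.

End Goodness.
End Filter.
End Ordinals.

Theorem claim6p1 (T : Type) (lt : T -> T -> Prop) (Hwo : strict_wellorder lt)
  (theta kappa sigma : T) (D : (T -> Prop) -> Prop) (beta : T -> T -> T)
  (* T is large enough: some ordinal lies above all the beta^alpha_eps *)
  (Hroom : exists top, forall a e, lt a theta -> lt e kappa -> lt (beta a e) top)
  (Htheta : is_cf lt theta theta)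
  (Hkappa : is_cardinal lt kappa)
  (Hsigma_card : is_cardinal lt sigma)
  (Hsigma_reg : is_cf lt sigma sigma)
  (Hsigma_kappa_plus : exists l, lt l sigma /\ card_lt (segT lt kappa) (segT lt l))
  (Hpow : forall a, lt a sigma ->
     card_lt (segT lt kappa -> segT lt a) (segT lt sigma))
  (HD : complete_filter lt theta sigma D)
  (Htail : forall a, lt a theta -> D (fun x => lt x theta /\ ~ lt x a)) :
  forall X : T -> Prop, (forall x, X x -> lt x theta) -> pos_mod lt theta D X ->
  exists (bstar : T -> T) (w : T -> Prop),
    (forall e, w e -> lt e kappa) /\
    (* (a) *)
    (forall e, lt e kappa -> ~ w e ->
       exists c, is_cf lt (bstar e) c /\ le lt sigma c /\ le lt c theta) /\
    let B := fun a => X a /\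
       (forall e, lt e kappa -> w e -> beta a e = bstar e) /\
       (forall e, lt e kappa -> ~ w e ->
          (exists s, is_sup lt (fun y => exists z, lt z kappa /\ y = bstar z /\
                                         lt (bstar z) (bstar e)) s
                     /\ lt s (beta a e)) /\
          lt (beta a e) (bstar e)) in
    (* (b) *)
    pos_mod lt theta D B /\
    (* (c) *)
    (forall bprime : T -> T,
       (forall e, lt e kappa -> ~ w e -> lt (bprime e) (bstar e)) ->
       pos_mod lt theta D (fun a => B a /\
          forall e, lt e kappa -> ~ w e -> lt (bprime e) (beta a e))).
Proof.
  intros X _ HX.
  destruct Hroom as [top Htop]. destruct Hsigma_kappa_plus as [l [Hl Hkl]].
  apply (card_lt_seg_lt Hwo) in Hkl.
  assert (Hk : lt kappa sigma) by exact (lt_trans Hwo Hkl Hl).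
  pose proof (small_type_bool Hwo Hsigma_reg Hl Hkl) as Hbool.
  destruct (exists_good Hwo HD beta Hsigma_reg Hk Hbool Hpow Htop HX)
    as [Y [c [w [HYX Hgood]]]].
  exists c, (fun e => lt e kappa /\ w e).
  split; [now intros e [He _]|]. split.
  - intros e He Hw. apply (good_cf_between Hwo HD _ Hgood He). intros Hwe. now apply Hw.
  - exact (good_claim Hwo HD Hk HYX Hgood).
Qed.
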